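(* Let $d\ge1$ and let $1\le k\le 2d$ be an integer with $k(k-1)<2d(2d-1)/c(d)$. Then $\theta^{\rm B}(k,d)=0$.
   Context: For integers $d\ge1$ and $1\le k\le 2d$, let each vertex $x\in\mathbb{Z}^d$, independently of all others, choose a uniformly random subset of exactly $k$ of its $2d$ nearest neighbors (in $\ell_1$-distance). The bidirectional $k$-neighbor graph ($k$-BnG) on $\mathbb{Z}^d$ has an undirected edge between nearest neighbors $x,y$ if and only if $x$ chose $y$ and $y$ chose $x$. We write $\theta^{\rm B}(k,d)=\mathbb{P}(o\rightsquigarrow\infty\text{ in the $k$-BnG on }\mathbb{Z}^d)$, where $o$ is the origin and $o\rightsquigarrow\infty$ is the event that there is an infinite self-avoiding path of edges of the $k$-BnG starting at $o$. The connective constant of $\mathbb{Z}^d$ is $c(d)=\lim_{n\to\infty}c_n(d)^{1/n}$, where $c_n(d)$ is the number of self-avoiding nearest-neighbor paths of length $n$ in $\mathbb{Z}^d$ starting at the origin. *)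

From HB Require Import structures.
From mathcomp Require Import all_boot all_order all_algebra.
From mathcomp Require Import all_classical all_reals all_analysis.
Set Implicit Arguments. Unset Strict Implicit. Unset Printing Implicit Defensive.
Import Order.TTheory GRing.Theory Num.Theory.
Local Open Scope classical_set_scope.
Local Open Scope ring_scope.

Definition site (d : nat) := {ffun 'I_d -> int}.

(* The 2d nearest-neighbour directions: (i, true) is +e_i, (i, false) is -e_i. *)
Definition dir (d : nat) := ('I_d * bool)%type.

Definition step (d : nat) (v : dir d) : site d :=
  [ffun j => if j == v.1 then (if v.2 then 1 else -1) else 0].

Definition origin (d : nat) : site d := [ffun => 0].

Definition opp_dir (d : nat) (v : dir d) : dir d := (v.1, ~~ v.2).

Fixpoint traj (d : nat) (x : site d) (w : seq (dir d)) : seq (site d) :=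
  match w with
  | [::] => [:: x]
  | v :: w' => x :: traj (x + step v) w'
  end.

Definition saw_count (d n : nat) : nat :=
  #|[set w : n.-tuple (dir d) | uniq (traj (origin d) w)]|.

Definition conn_const (R : realType) (d : nat) : R :=
  limn (fun n : nat => ((saw_count d n)%:R : R) `^ (n%:R)^-1).

Definition unif_k (R : realType) (d k : nat) (S : {set dir d}) : R :=
  if #|S| == k then ('C(2 * d, k)%:R)^-1 else 0.

(* C : site d -> Omega -> {set dir d} is a family of independent choices,
   each a uniformly random k-subset of the 2d neighbours: all the events
   {C x = S} are measurable and every finite-dimensional joint law is
   the product of the uniform laws. *)
Definition iid_uniform_choices (R : realType) (dd : measure_display)
  (Omega : measurableType dd) (P : probability Omega R) (d k : nat)
  (C : site d -> Omega -> {set dir d}) : Prop :=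
  (forall x S, measurable (C x @^-1` [set S])) /\
  (forall (s : seq (site d)) (S : site d -> {set dir d}), uniq s ->
     P (\big[setI/setT]_(x <- s) (C x @^-1` [set S x]))
     = (\prod_(x <- s) @unif_k R d k (S x))%:E).

Definition bng_edge (d : nat) (Omega : Type) (C : site d -> Omega -> {set dir d})
  (om : Omega) (x y : site d) : Prop :=
  exists v : dir d, y = x + step v /\ v \in C x om /\ opp_dir v \in C y om.

Definition percolates (d : nat) (Omega : Type) (C : site d -> Omega -> {set dir d})
  (om : Omega) : Prop :=
  exists p : nat -> site d,
    p 0%N = origin d /\ injective p /\ forall n, bng_edge C om (p n) (p n.+1).

From HB Require Import structures.
From mathcomp Require Import all_boot all_order all_algebra.
From mathcomp Require Import all_classical all_reals all_analysis.
From mathcomp Require Import zify.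
Import Order.TTheory GRing.Theory Num.Theory numFieldNormedType.Exports.
Local Open Scope classical_set_scope.
Local Open Scope ring_scope.
Set Implicit Arguments. Unset Strict Implicit. Unset Printing Implicit Defensive.

(* If the origin percolates, then for every n some self-avoiding walk of length
   n+1 from the origin has all its edges open; by König's lemma this
   characterises percolation, which is therefore a measurable event.  Along a
   fixed self-avoiding walk, each of its n interior vertices must have chosen
   both of its walk neighbours; a uniform k-subset of the 2d directions does so
   with probability q = k(k-1)/(2d(2d-1)), independently over distinct
   vertices.  A union bound over walks gives P(o ~> oo) <= c_{n+1}(d) q^n, which
   tends to 0 because c_n(d)^{1/n} -> c(d) and q c(d) < 1. *)

Section OpenWalks.
Variables (d : nat) (Omega : Type) (C : site d -> Omega -> {set dir d}) (om : Omega).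

Definition open_dir (x : site d) (v : dir d) : bool :=
  (v \in C x om) && (opp_dir v \in C (x + step v) om).

Fixpoint open_walk (x : site d) (w : seq (dir d)) : bool :=
  if w is v :: w' then open_dir x v && open_walk (x + step v) w' else true.

Definition open_saw (n : nat) : Prop :=
  exists w : n.-tuple (dir d), uniq (traj (origin d) w) && open_walk (origin d) w.

Definition extendable (visited : seq (site d)) (x : site d) : Prop :=
  forall m, exists w : seq (dir d),
    [/\ (m <= size w)%N, open_walk x w & uniq (visited ++ traj x w)].

(* König's lemma: x has finitely many neighbours, so if every neighbour were
   a dead end beyond some depth, so would be x. *)
Lemma extendable_step visited x : extendable visited x ->
  exists v, open_dir x v /\ extendable (rcons visited x) (x + step v).
Proof.
move=> ext; apply/not_existsP => dead.
have depth v : exists m : nat, forall w : seq (dir d), (m <= size w)%N ->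
    open_dir x v -> open_walk (x + step v) w ->
    ~~ uniq (rcons visited x ++ traj (x + step v) w).
  have [xv|] := boolP (open_dir x v); last by exists 0%N.
  have /existsNP[m /forallNP mE] : ~ extendable (rcons visited x) (x + step v).
    by move=> ext'; apply: (dead v).
  by exists m => w mw _ wo; apply/negP => wu; apply: (mE w).
have [f fE] := choice depth.
have [[|v w] [//= mw /andP[xv wo] wu]] := ext (\max_(v : dir d) f v).+1.
have /(_ _ xv wo)/negP[] := fE v w; last by rewrite cat_rcons.
by apply: leq_trans (leq_bigmax v) _; rewrite -ltnS.
Qed.

Lemma open_saws_percolates : (forall n, open_saw n) -> percolates C om.
Proof.
move=> saws.
have ext0 : extendable [::] (origin d).
  by move=> m; have [w /andP[wu wo]] := saws m; exists w; rewrite size_tuple.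
have [w1 _] := saws 1%N; pose v0 := thead w1.
have next (s : seq (site d) * site d) : exists v : dir d, extendable s.1 s.2 ->
    open_dir s.2 v /\ extendable (rcons s.1 s.2) (s.2 + step v).
  have [/extendable_step[v vE]|] := pselect (extendable s.1 s.2); last by exists v0.
  by exists v.
have [f fE] := choice next.
pose fix state n : seq (site d) * site d :=
  if n is n'.+1 then (rcons (state n').1 (state n').2, (state n').2 + step (f (state n')))
  else ([::], origin d).
pose p n := (state n).2.
have ext n : extendable (state n).1 (state n).2.
  by elim: n => [|n IH] //=; have [] := fE _ IH.
have visitedE n : (state n).1 = map p (iota 0 n).
  by elim: n => [//|n IH]; rewrite [LHS]/= IH -cats1 -addn1 iotaD map_cat.
have fresh m n : (m < n)%N -> p m != p n.
  move=> mn; have [w [_ _]] := ext n 0%N.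
  rewrite cat_uniq visitedE => /and3P[_ /hasPn/(_ (p n)) pn _].
  have {pn} : p n \notin map p (iota 0 n) by apply: pn; case: w => [|? ?]; rewrite mem_head.
  by apply: contraNneq => <-; apply: map_f; rewrite mem_iota.
exists p; split => //; split => [m n|n].
  by move/eqP; apply: contraTeq; case: ltngtP => // mn _; [|rewrite eq_sym]; apply: fresh.
by exists (f (state n)); have [/andP[]] := fE _ (ext n).
Qed.

Lemma percolates_open_saw n : percolates C om -> open_saw n.
Proof.
move=> [p [p0 [p_inj pE]]]; have [g gE] := choice pE.
have trajE j m : traj (p m) (map g (iota m j)) = map p (iota m j.+1).
  by elim: j m => [//|j IH] m /=; have [<- _] := gE m; rewrite IH.
have openE j m : open_walk (p m) (map g (iota m j)).
  elim: j m => [//|j IH] m /=; have [pS [gm gS]] := gE m.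
  by rewrite /open_dir gm -pS gS IH.
have sz : size (map g (iota 0 n)) == n by rewrite size_map size_iota.
exists (Tuple sz) => /=; rewrite -p0 trajE openE andbT.
by rewrite map_inj_uniq // iota_uniq.
Qed.

End OpenWalks.

Definition chosen_in d (Omega : Type) (C : site d -> Omega -> {set dir d})
  (x : site d) (A : pred {set dir d}) : set Omega := [set om | A (C x om)].

Section Measurability.
Variables (dd : measure_display) (Omega : measurableType dd) (d : nat).
Variable C : site d -> Omega -> {set dir d}.
Hypothesis C_measurable : forall x S, measurable (C x @^-1` [set S]).

Lemma measurable_chosen_in x A : measurable (chosen_in C x A).
Proof.
have -> : chosen_in C x A = \bigcup_(S in [set S | A S]) (C x @^-1` [set S]).
  apply/seteqP; split => [om xA|om [S /= AS xS]]; first by exists (C x om).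
  by rewrite /chosen_in /= xS.
exact: fin_bigcup_measurable finite_finset (fun S _ => C_measurable x S).
Qed.

Lemma measurable_open_walk x w : measurable [set om | open_walk C om x w].
Proof.
elim: w x => [|v w IH] x /=; first by rewrite (_ : [set _ | true] = setT) //; apply/seteqP.
have -> : [set om | open_walk C om x (v :: w)] =
    chosen_in C x [pred S : {set dir d} | v \in S] `&`
    chosen_in C (x + step v) [pred S : {set dir d} | opp_dir v \in S] `&`
    [set om | open_walk C om (x + step v) w].
  by apply/seteqP; split => om; rewrite /= /chosen_in /open_dir /=;
    [case/andP=> /andP[-> ->] ->|case=> -[-> ->] ->].
by apply: measurableI; [apply: measurableI; apply: measurable_chosen_in | apply: IH].
Qed.

Lemma open_sawE n : [set om | open_saw C om n] =
  \bigcup_(w in [set w : n.-tuple (dir d) | uniq (traj (origin d) w)])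
     [set om | open_walk C om (origin d) w].
Proof.
by apply/seteqP; split => [om [w /andP[]]|om [w /= wu wo]]; exists w => //; apply/andP.
Qed.

Lemma percolatesE : [set om | percolates C om] = \bigcap_n [set om | open_saw C om n].
Proof.
apply/seteqP; split => om /=; first by move=> perc n _; apply: percolates_open_saw.
by move=> saws; apply: open_saws_percolates => n; apply: saws.
Qed.

Lemma measurable_open_saw n : measurable [set om | open_saw C om n].
Proof.
rewrite open_sawE; apply: fin_bigcup_measurable; first exact: finite_finset.
by move=> w _; apply: measurable_open_walk.
Qed.

Lemma measurable_percolates : measurable [set om | percolates C om].
Proof.
by rewrite percolatesE; apply: bigcap_measurableType => n _; apply: measurable_open_saw.
Qed.

End Measurability.

Lemma measure_bigsetU_le (dT : measure_display) (T : measurableType dT) (R : realType)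
    (mu : {measure set T -> \bar R}) (I : Type) (r : seq I) (P : pred I) (F : I -> set T) :
  (forall i, measurable (F i)) ->
  (mu (\big[setU/set0]_(i <- r | P i) F i) <= \sum_(i <- r | P i) mu (F i))%E.
Proof.
move=> mF; elim: r => [|i r IH]; first by rewrite !big_nil measure0.
rewrite !big_cons; case: ifP => // _.
apply: le_trans (measureU2 _ _ _) _ => //; first exact: bigsetU_measurable.
exact: leeD.
Qed.

Definition unif_mass (R : realType) (d k : nat) (A : pred {set dir d}) : R :=
  \sum_(S in A) unif_k R k S.

Section IndependentChoices.
Variables (R : realType) (dd : measure_display) (Omega : measurableType dd).
Variables (P : probability Omega R) (d k : nat) (C : site d -> Omega -> {set dir d}).
Hypothesis C_iid : iid_uniform_choices P k C.

Definition chosen_eq (s : seq (site d)) (S : site d -> {set dir d}) : set Omega :=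
  \big[setI/setT]_(x <- s) (C x @^-1` [set S x]).

Let measurable_chosen s' S (s : seq (site d * pred {set dir d})) :
  measurable (chosen_eq s' S `&` \big[setI/setT]_(r <- s) chosen_in C r.1 r.2).
Proof.
apply: measurableI; apply: bigsetI_measurable => *; last apply: measurable_chosen_in;
  exact: C_iid.1.
Qed.

(* The sites of [s'] carry exact constraints, those of [s] only membership
   constraints; splitting the head of [s] into its possible exact values
   moves it from [s] to [s']. *)
Lemma prob_chosen_le (s : seq (site d * pred {set dir d})) s' S :
  uniq (map fst s ++ s') ->
  (P (chosen_eq s' S `&` \big[setI/setT]_(r <- s) chosen_in C r.1 r.2)
  <= ((\prod_(x <- s') unif_k R k (S x)) * \prod_(r <- s) unif_mass R k r.2)%:E)%E.
Proof.
elim: s s' S => [|[x A] s IH] s' S /=.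
  by move=> s'_uniq; rewrite big_nil setIT big_nil mulr1 C_iid.2.
move=> x_s_s'_uniq; have xs_uniq : uniq (map fst s ++ x :: s').
  by rewrite -cat1s uniq_catCA cat1s.
have x_notin_s' : x \notin s' by move: x_s_s'_uniq; rewrite mem_cat negb_or => /andP[/andP[]].
pose S' S0 y := if y == x then S0 else S y.
set rest := \big[setI/setT]_(r <- s) chosen_in C r.1 r.2.
have split_x : chosen_eq s' S `&` \big[setI/setT]_(r <- (x, A) :: s) chosen_in C r.1 r.2
    `<=` \big[setU/set0]_(S0 in A) (chosen_eq (x :: s') (S' S0) `&` rest).
  rewrite big_cons -bigcup_pred /chosen_eq -bigcap_seq.
  move=> om [s'E [/= xA restE]]; exists (C x om) => //; split => //.
  rewrite -bigcap_seq => y /=.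
  by rewrite inE /S'; case: eqP => [->//|_ /= /s'E].
apply: le_trans (le_measure _ _ _ split_x) _; rewrite ?inE.
- exact: measurable_chosen.
- by apply: bigsetU_measurable => S0 _; apply: measurable_chosen.
apply: le_trans (measure_bigsetU_le _ _ _ _) _ => [S0|]; first exact: measurable_chosen.
apply: (@le_trans _ _ (\sum_(S0 in A)
    ((\prod_(y <- x :: s') unif_k R k (S' S0 y)) * \prod_(r <- s) unif_mass R k r.2)%:E)).
  by apply: lee_sum => S0 _; apply: IH.
rewrite sumEFin lee_fin le_eqVlt; apply/orP; left; apply/eqP.
rewrite /unif_mass big_cons /= mulrCA big_distrl /=; apply: eq_bigr => S0 _.
rewrite big_cons /S' eqxx -mulrA; congr (_ * (_ * _)).
by apply: eq_big_seq => y ys'; case: eqP ys' x_notin_s' => // ->->.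
Qed.

Lemma prob_bigcap_chosen_in_le (s : seq (site d * pred {set dir d})) :
  uniq (map fst s) ->
  (P (\big[setI/setT]_(r <- s) chosen_in C r.1 r.2) <= (\prod_(r <- s) unif_mass R k r.2)%:E)%E.
Proof.
move=> s_uniq; have := @prob_chosen_le s [::] (fun _ => finset.set0).
by rewrite cats0 /chosen_eq !big_nil setTI mul1r; apply.
Qed.

End IndependentChoices.

Lemma card_supsets (T : finType) (B : {set T}) j :
  #|[set S : {set T} | B \subset S & #|S| == #|B| + j]%SET| = 'C(#|T| - #|B|, j).
Proof.
have cardBc : #|~: B| = (#|T| - #|B|)%N by rewrite -(cardsC B) addKn.
rewrite -cardBc -cards_draws -[RHS](@card_in_imset _ _ (fun A => A :|: B)); last first.
  have UBK (A : {set T}) : A \subset ~: B -> (A :|: B) :\: B = A.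
    move=> ABc; rewrite finset.setDUl finset.setDv finset.setU0.
    by apply/finset.setDidPl; rewrite finset.disjoints_subset.
  move=> A1 A2; rewrite !inE => /andP[A1B _] /andP[A2B _] A12.
  by rewrite -(UBK A1) // A12 UBK.
apply: eq_card => S; rewrite inE; apply/andP/imsetP => [[BS /eqP cardS]|[A]].
  exists (S :\: B); last first.
    apply/setP => x; rewrite !inE.
    by case: (boolP (x \in B)) (fintype.subsetP BS x) => [_ ->|_ _] //=; rewrite orbF.
  by rewrite inE subsetDr cardsDS // cardS addKn /=.
rewrite inE => /andP[ABc /eqP cardA] ->; split; first exact: finset.subsetUr.
by rewrite cardsU finset.disjoint_setI0 ?finset.disjoints_subset // cards0 subn0 addnC cardA.
Qed.

Lemma card_sets_with_pair (T : finType) (a b : T) k : a != b ->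
  (#|[set S : {set T} | [&& a \in S, b \in S & #|S| == k]]%SET| * (#|T| * (#|T| - 1))
   = k * (k - 1) * 'C(#|T|, k))%N.
Proof.
move=> ab; set B := [set a; b]%SET.
have cardB : #|B| = 2%N by rewrite cards2 ab.
have pairE (S : {set T}) : (a \in S) && (b \in S) = (B \subset S).
  by rewrite /B finset.subUset !finset.sub1set.
have [m cardT] : exists m, #|T| = m.+2.
  by exists (#|T| - 2)%N; have := max_card B; rewrite cardB; lia.
have cardE : #|[set S : {set T} | [&& a \in S, b \in S & #|S| == k]]%SET|
    = #|[set S : {set T} | B \subset S & #|S| == k]%SET|.
  by apply: eq_card => S; rewrite !inE andbA pairE.
rewrite cardE; case: k {cardE} => [|[|j]].
1,2: rewrite (_ : #|_| = 0%N) //; apply: eq_card0 => S; rewrite !inE;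
  by apply/negbTE/negP => /andP[/subset_leq_card + /eqP cardS]; rewrite cardB cardS.
rewrite {1}(_ : j.+2 = #|B| + j)%N; last by rewrite cardB.
rewrite card_supsets cardT cardB subSS !subn1 /=.
have := mul_bin_diag m.+1 j; have := mul_bin_diag m.+2 j.+1; rewrite /= => diag2 diag1.
by rewrite mulnCA mulnC (mulnC 'C(m, j)) diag1 -mulnA (mulnC _ m.+2) diag2 mulnA (mulnC j.+1).
Qed.

Lemma card_dir d : #|{: dir d}| = (2 * d)%N.
Proof. by rewrite card_prod card_ord card_bool mulnC. Qed.

Definition pair_prob (R : realType) (d k : nat) : R :=
  (k * (k - 1))%:R / ((2 * d) * (2 * d - 1))%:R.

Lemma unif_mass_pair (R : realType) d k (a b : dir d) : (k <= 2 * d)%N -> a != b ->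
  unif_mass R k (fun S : {set dir d} => (a \in S) && (b \in S)) = pair_prob R d k.
Proof.
move=> kd ab; have two_le_2d : (2 <= 2 * d)%N.
  by rewrite -card_dir; have := max_card [set a; b]%SET; rewrite cards2 ab.
rewrite /unif_mass /unif_k /pair_prob -big_mkcondr sumr_const -[_ *+ #|_|]mulr_natr mulrC.
apply/eqP; rewrite eqr_div ?pnatr_eq0 -?lt0n ?bin_gt0 ?muln_gt0 //; last first.
  by apply/andP; split; lia.
rewrite -!natrM eqr_nat -card_dir -(card_sets_with_pair k ab); apply/eqP.
by congr (_ * _)%N; apply: eq_card => S; rewrite !inE andbA.
Qed.

Lemma step_opp d (v : dir d) : step (opp_dir v) = - step v.
Proof.
by apply/ffunP => j; rewrite !ffunE /=; case: (j == v.1); case: v.2; rewrite ?oppr0 ?opprK.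
Qed.

Lemma mem_traj_head d (x : site d) w : x \in traj x w.
Proof. by case: w => [|? ?]; rewrite mem_head. Qed.

Lemma saw_countE d n :
  saw_count d n = #|[set w : n.-tuple (dir d) | uniq (traj (origin d) w)]%SET|.
Proof. by apply: eq_card => w; rewrite finset.inE; apply/idP/idP; rewrite in_setE. Qed.

(* Along a walk [w] from [y], entered through direction [vin], every vertex
   left by a step must have chosen both the way back and the way forward. *)
Fixpoint path_constraints d (y : site d) (vin : dir d) (w : seq (dir d)) :
    seq (site d * pred {set dir d}) :=
  if w is v :: w' then
    (y, fun S : {set dir d} => (opp_dir vin \in S) && (v \in S))
      :: path_constraints (y + step v) v w'
  else [::].

Lemma subseq_path_constraints d (y : site d) vin w :
  subseq (map fst (path_constraints y vin w)) (traj y w).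
Proof. by elim: w y vin => [|v w IH] y vin //=; rewrite eqxx. Qed.

Lemma open_walk_path_constraints d Omega (C : site d -> Omega -> {set dir d}) om y vin w :
  opp_dir vin \in C y om -> open_walk C om y w ->
  (\big[setI/setT]_(r <- path_constraints y vin w) chosen_in C r.1 r.2) om.
Proof.
elim: w y vin => [|v w IH] y vin /=; first by rewrite big_nil.
move=> back /andP[/andP[forth back'] wo]; rewrite big_cons; split; last exact: IH.
by rewrite /chosen_in /= back forth.
Qed.

Lemma prod_path_constraints (R : realType) d k (z y : site d) vin w :
  (k <= 2 * d)%N -> y = z + step vin -> uniq (z :: traj y w) ->
  \prod_(r <- path_constraints y vin w) unif_mass R k r.2 = pair_prob R d k ^+ size w.
Proof.
move=> kd; elim: w z y vin => [|v w IH] z y vin /=; first by rewrite big_nil.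
move=> yE /andP[z_fresh /andP[y_fresh w_uniq]]; rewrite big_cons exprS unif_mass_pair //.
  by congr (_ * _); apply: (IH y) => //=; rewrite y_fresh.
apply: contraNneq z_fresh => vE.
by rewrite inE -vE step_opp yE addrK mem_traj_head orbT.
Qed.

Section OpenSawBound.
Variables (R : realType) (dd : measure_display) (Omega : measurableType dd).
Variables (P : probability Omega R) (d k : nat) (C : site d -> Omega -> {set dir d}).
Hypotheses (C_iid : iid_uniform_choices P k C) (kd : (k <= 2 * d)%N).

Let C_measurable : forall x S, measurable (C x @^-1` [set S]) := C_iid.1.

Lemma prob_open_walk_le v0 w : uniq (traj (origin d) (v0 :: w)) ->
  (P [set om | open_walk C om (origin d) (v0 :: w)] <= (pair_prob R d k ^+ size w)%:E)%E.
Proof.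
move=> /= /andP[origin_fresh w_uniq]; set y := origin d + step v0.
set constraints := path_constraints y v0 w.
have walk_sub : [set om | open_walk C om (origin d) (v0 :: w)] `<=`
    \big[setI/setT]_(r <- constraints) chosen_in C r.1 r.2.
  by move=> om /= /andP[/andP[_ back] wo]; apply: open_walk_path_constraints.
apply: le_trans (le_measure _ _ _ walk_sub) _; rewrite ?inE.
- exact: (measurable_open_walk C_measurable).
- by apply: bigsetI_measurable => r _; exact: (measurable_chosen_in C_measurable).
apply: le_trans (prob_bigcap_chosen_in_le C_iid _) _.
  exact: subseq_uniq (subseq_path_constraints _ _ _) w_uniq.
by rewrite (@prod_path_constraints _ _ _ (origin d)) //= origin_fresh.
Qed.

Lemma prob_open_saw_le n :
  (P [set om | open_saw C om n.+1] <= ((saw_count d n.+1)%:R * pair_prob R d k ^+ n)%:E)%E.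
Proof.
set saws := [set w : n.+1.-tuple (dir d) | uniq (traj (origin d) w)]%SET.
have saw_sub : [set om | open_saw C om n.+1] `<=`
    \big[setU/set0]_(w in saws) [set om | open_walk C om (origin d) w].
  by rewrite -bigcup_pred => om [w /andP[wu wo]]; exists w; rewrite /= ?inE.
apply: le_trans (le_measure _ _ _ saw_sub) _; rewrite ?inE.
- exact: (measurable_open_saw C_measurable).
- by apply: bigsetU_measurable => w _; exact: (measurable_open_walk C_measurable).
apply: le_trans.
  by apply: measure_bigsetU_le => w; exact: (measurable_open_walk C_measurable).
apply: (@le_trans _ _ (\sum_(w in saws) (pair_prob R d k ^+ n)%:E)).
  apply: lee_sum => -[[|v0 w] //= size_w]; rewrite inE => w_uniq.
  by have /eqP[<-] := size_w; apply: prob_open_walk_le.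
by rewrite sumEFin lee_fin sumr_const saw_countE mulr_natl.
Qed.

Lemma prob_percolates_le n :
  (P [set om | percolates C om] <= ((saw_count d n.+1)%:R * pair_prob R d k ^+ n)%:E)%E.
Proof.
apply: le_trans (prob_open_saw_le n); apply: le_measure; rewrite ?inE.
- exact: (measurable_percolates C_measurable).
- exact: (measurable_open_saw C_measurable).
by move=> om; apply: percolates_open_saw.
Qed.

End OpenSawBound.

Lemma powR_invn_expr (R : realType) (x : R) n : 0 <= x -> (0 < n)%N ->
  (x `^ (n%:R)^-1) ^+ n = x.
Proof.
move=> x_ge0 n_gt0.
by rewrite -powR_mulrn ?powR_ge0 // -powRrM mulVf ?pnatr_eq0 -?lt0n // powRr1.
Qed.

Lemma root_test_cvg0 (R : realType) (a : R ^nat) (l : R) : (forall n, 0 <= a n) ->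
  a n `^ (n%:R)^-1 @[n --> \oo] --> l -> l < 1 -> a n @[n --> \oo] --> 0.
Proof.
move=> a_ge0 root_cvg l_lt1; have [l_lt_r r_lt1] := midf_lt l_lt1.
set r := (l + 1) / 2 in l_lt_r r_lt1.
have [N _ rootN] := cvgr_lt l root_cvg r l_lt_r.
have r_gt0 : 0 < r by apply: le_lt_trans (powR_ge0 _ _) (rootN N (leqnn N)).
apply: (@squeeze_cvgr _ _ _ _ (cst 0) (GRing.exp r)); last 2 first.
- exact: cvg_cst.
- by apply: cvg_expr; rewrite gtr0_norm.
near=> n; rewrite a_ge0 -(@powR_invn_expr _ _ n (a_ge0 n)); last by near: n; exists 1%N.
by rewrite lerXn2r ?nnegrE ?powR_ge0 ?ltW //; apply: rootN; near: n; exists N.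
Unshelve. all: end_near.
Qed.

Lemma growth_rate_cvg0 (R : realType) (c : R ^nat) (L q : R) : (forall n, 0 <= c n) ->
  c n `^ (n%:R)^-1 @[n --> \oo] --> L -> 0 <= q -> q * L < 1 ->
  c n * q ^+ n @[n --> \oo] --> 0.
Proof.
move=> c_ge0 root_cvg q_ge0 qL_lt1.
apply: (root_test_cvg0 _ _ qL_lt1) => [n|]; first by rewrite mulr_ge0 ?exprn_ge0.
have rootE : \forall n \near \oo, q * c n `^ (n%:R)^-1 = (c n * q ^+ n) `^ (n%:R)^-1.
  near=> n; have n_gt0 : (0 < n)%N by near: n; exists 1%N.
  rewrite powRM ?exprn_ge0 // -powR_mulrn // -powRrM mulfV ?pnatr_eq0 -?lt0n //.
  by rewrite powRr1 // mulrC.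
by apply: cvg_trans (near_eq_cvg rootE) _; apply: cvgMr.
Unshelve. all: end_near.
Qed.

Lemma cvg0_weight_shiftS (R : realType) (c : R ^nat) (q : R) :
  c n * q ^+ n @[n --> \oo] --> 0 -> c n.+1 * q ^+ n @[n --> \oo] --> 0.
Proof.
have [-> _|q_neq0 cvg0] := eqVneq q 0.
  apply: cvg_near_cst; near=> n; have n_gt0 : (0 < n)%N by near: n; exists 1%N.
  by rewrite expr0n eqn0Ngt n_gt0 mulr0.
have -> : (fun n => c n.+1 * q ^+ n) = (fun n => q^-1 * (c n.+1 * q ^+ n.+1)).
  by apply/funext => n; rewrite exprS mulrCA mulKf.
by rewrite -(mulr0 q^-1); apply: cvgMr; rewrite (cvg_shiftS (fun n => c n * q ^+ n)).
Unshelve. all: end_near.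
Qed.

Theorem lemma2p11 (R : realType) (d k : nat) (dd : measure_display)
  (Omega : measurableType dd) (P : probability Omega R)
  (C : site d -> Omega -> {set dir d}) :
  (1 <= d)%N -> (1 <= k <= 2 * d)%N ->
  ((k * (k - 1))%:R : R) < ((2 * d) * (2 * d - 1))%:R / conn_const R d ->
  iid_uniform_choices P k C ->
  P [set om | percolates C om] = 0%E.
Proof.
move=> d_ge1 /andP[_ kd] below_threshold C_iid.
set L := conn_const R d in below_threshold.
have pairs_gt0 : 0 < ((2 * d) * (2 * d - 1))%:R :> R.
  by rewrite ltr0n muln_gt0; apply/andP; split; lia.
(* [conn_const] is a [limn], which is 0 on divergent sequences; the threshold
   condition forces [L > 0], hence convergence. *)
have L_gt0 : 0 < L.
  have : 0 < ((2 * d) * (2 * d - 1))%:R / L by apply: le_lt_trans below_threshold.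
  by rewrite pmulr_rgt0 // invr_gt0.
have root_cvg : (saw_count d n)%:R `^ (n%:R)^-1 @[n --> \oo] --> L.
  by apply: cvgNpoint; apply: lt0r_neq0.
have q_ge0 : 0 <= pair_prob R d k by rewrite divr_ge0.
have qL_lt1 : pair_prob R d k * L < 1.
  by rewrite mulrAC ltr_pdivrMr // mul1r -ltr_pdivlMr.
have bounds_cvg0 :
    ((saw_count d n.+1)%:R * pair_prob R d k ^+ n)%:E @[n --> \oo] --> 0%:E.
  apply: cvg_EFin; first exact: nearW.
  exact: cvg0_weight_shiftS (growth_rate_cvg0 (fun n => ler0n _ _) root_cvg q_ge0 qL_lt1).
apply/eqP; rewrite eq_le measure_ge0 andbT.
apply: cvge_ge bounds_cvg0; exact: nearW (prob_percolates_le C_iid kd).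
Qed.
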